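(* For disjunctive guarded systems of type $(A,B)$ and every LTL formula without the next operator $h(A,B_1)$: for all $n>2|B|$, if $(A,B)^{(1,n)}\models\mathsf E_{uncond}\,h(A,B_1)$ then $(A,B)^{(1,2|B|)}\models\mathsf E_{uncond}\,h(A,B_1)$.
   Context: A process template is $U=(Q_U,\mathit{init}_U,\Sigma_U,\delta_U)$ with finite states $Q_U$, initial state $\mathit{init}_U$, finite input alphabet $\Sigma_U$ and guarded transitions $\delta_U\subseteq Q_U\times\Sigma_U\times 2^{Q_A\cup Q_B}\times Q_U$; templates $A,B$ have disjoint state sets and disjoint alphabets, and $|B|=|Q_B|$. The system $(A,B)^{(1,n)}$ consists of one copy of $A$ and $n$ copies $B_1,\dots,B_n$ of $B$; a global state $s$ gives each process a local state, a global input $e$ gives each process an input letter, and initially all processes are in their initial states. In a disjunctive system a guard $g$ is satisfied for process $p$ in $s$ iff some process $p'\ne p$ has $s(p')\in g$. A local transition $(q,\sigma,g,q')$ of $p$ is enabled for $(s,e)$ if $s(p)=q$, $e(p)=\sigma$ and $g$ is satisfied for $p$ in $s$; a global step changes the state of exactly one process along an enabled transition. A path is a sequence of configurations $(s_1,e_1,p_1),(s_2,e_2,p_2),\dots$ where $p_t$ makes the step from $s_t$ to $s_{t+1}$ under $e_t$, a configuration $(s,e,\bot)$ occurs (as the last one) exactly when all processes are disabled, and $e_{t+1}(p)=e_t(p)$ for every process $p$ not moving at moment $t$. A run is a maximal path from the initial state. A run is unconditionally fair if it is infinite and every process moves infinitely often. For an LTL formula $h(A,B_1)$ without next operator over atomic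 propositions from $Q_A\cup\Sigma_A$ and $(Q_B\cup\Sigma_B)\times\{1\}$ (interpreted on the local states and inputs of $A$ and $B_1$), $(A,B)^{(1,n)}\models\mathsf E_{uncond}\,h(A,B_1)$ means some unconditionally fair run satisfies $h$. *)

From mathcomp Require Import all_boot.

Set Implicit Arguments.
Unset Strict Implicit.
Unset Printing Implicit Defensive.

(* The state sets Q_A, Q_B are finite types QA, QB; they are disjoint  *)
(* by construction since the union Q_A \cup Q_B is the sum QA + QB.    *)
Record template (QA QB : finType) (Q S : finType) := Template {
  t_init  : Q;
  t_delta : {set Q * S * {set (QA + QB)} * Q}
}.

Section System.
Variables (QA QB SA SB : finType).
Variables (A : template QA QB QA SA) (B : template QA QB QB SB).
Variable n : nat.

(* System (A,B)^(1,n): process None is the copy of A,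
   process Some i (i : 'I_n) is B_{i+1}. *)
Definition proc := option 'I_n.

Definition gstate := (QA * ('I_n -> QB))%type.
Definition ginput := (SA * ('I_n -> SB))%type.

Definition lstate (s : gstate) (p : proc) : QA + QB :=
  match p with None => inl s.1 | Some i => inr (s.2 i) end.
Definition linput (e : ginput) (p : proc) : SA + SB :=
  match p with None => inl e.1 | Some i => inr (e.2 i) end.

Definition guard_sat (s : gstate) (p : proc) (g : {set (QA + QB)}) : Prop :=
  exists p' : proc, p' <> p /\ lstate s p' \in g.

Definition step (s : gstate) (e : ginput) (p : proc) (s' : gstate) : Prop :=
  match p with
  | None => exists g q',
      (s.1, e.1, g, q') \in t_delta A /\ guard_sat s None g /\
      s'.1 = q' /\ (forall j, s'.2 j = s.2 j)
  | Some i => exists g q',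
      (s.2 i, e.2 i, g, q') \in t_delta B /\ guard_sat s (Some i) g /\
      s'.1 = s.1 /\ (forall j, s'.2 j = if j == i then q' else s.2 j)
  end.

(* configurations (s, e, p) of an infinite path; the "bottom" process
   only occurs in the last configuration of finite paths, which are
   irrelevant for unconditionally fair runs (these are infinite). *)
Definition config := (gstate * ginput * proc)%type.

Definition cs (c : config) : gstate := c.1.1.
Definition ce (c : config) : ginput := c.1.2.
Definition cp (c : config) : proc := c.2.

Definition is_initial (s : gstate) : Prop :=
  s.1 = t_init A /\ forall i, s.2 i = t_init B.

(* an infinite path starting in the initial state; an infinite path is
   automatically maximal, hence an (infinite) run *)
Definition infinite_run (r : nat -> config) : Prop :=
  is_initial (cs (r 0)) /\
  (forall t, step (cs (r t)) (ce (r t)) (cp (r t)) (cs (r t.+1))) /\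
  (forall t (p : proc), p <> cp (r t) ->
      linput (ce (r t.+1)) p = linput (ce (r t)) p).

Definition uncond_fair_run (r : nat -> config) : Prop :=
  infinite_run r /\ forall (p : proc) (t : nat), exists t', t <= t' /\ cp (r t') = p.

End System.

Inductive atom (QA SA QB SB : Type) :=
| AtA_state of QA
| AtA_input of SA
| AtB1_state of QB
| AtB1_input of SB.

Inductive ltlx (QA SA QB SB : Type) :=
| LTrue
| LAtom of atom QA SA QB SB
| LNot of ltlx QA SA QB SB
| LAnd of ltlx QA SA QB SB & ltlx QA SA QB SB
| LUntil of ltlx QA SA QB SB & ltlx QA SA QB SB.

Section Semantics.
Variables (QA QB SA SB : finType) (n : nat).

(* atomic propositions are interpreted on the local states and inputs of
   A and of B_1 (the B-process with index 0) *)
Definition atom_holds (c : config QA QB SA SB n) (a : atom QA SA QB SB) : Prop :=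
  match a with
  | AtA_state q => (cs c).1 = q
  | AtA_input x => (ce c).1 = x
  | AtB1_state q => exists i : 'I_n, val i = 0 /\ (cs c).2 i = q
  | AtB1_input x => exists i : 'I_n, val i = 0 /\ (ce c).2 i = x
  end.

Fixpoint ltl_sat (r : nat -> config QA QB SA SB n) (t : nat)
    (f : ltlx QA SA QB SB) : Prop :=
  match f with
  | LTrue => True
  | LAtom a => atom_holds (r t) a
  | LNot f1 => ~ ltl_sat r t f1
  | LAnd f1 f2 => ltl_sat r t f1 /\ ltl_sat r t f2
  | LUntil f1 f2 => exists t', t <= t' /\ ltl_sat r t' f2 /\
                     forall k, t <= k < t' -> ltl_sat r k f1
  end.

End Semantics.

Definition E_uncond (QA QB SA SB : finType)
    (A : template QA QB QA SA) (B : template QA QB QB SB) (n : nat)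
    (h : ltlx QA SA QB SB) : Prop :=
  exists r : nat -> config QA QB SA SB n,
    uncond_fair_run A B r /\ ltl_sat r 0 h.

From mathcomp Require Import all_boot.
From mathcomp Require Import boolp.

(* Given an unconditionally fair run x of (A,B)^(1,n), we build one of
   (A,B)^(1,2|B|) in which A and B_1 behave exactly as in x up to stuttering, so the
   two runs satisfy the same LTL formulas without next.  The other 2|B| - 1 copies of
   B are helpers: at each step of x a helper either stays or copies the move of a
   process whose state it shares.  Since guards are disjunctive, the simulation stays
   enabled as long as every state occupied by an idle process of x is also occupied by
   an idle helper, and it is unconditionally fair if every helper moves infinitely often.
   One helper floods each visited state q: it follows the first process reaching q and
   then sits in q; if q is visited only finitely often it leaves with its last occupant.
   A recurrent state q gets a second, floating helper that follows a process visiting q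
   infinitely often; whenever that process leaves q the two helpers exchange roles.
   This uses |visited| + |recurrent| <= 2|B| helpers, and one of them can be saved:
   either some process visits two recurrent states infinitely often, and these share a
   floating helper; or B_1 visits a recurrent state infinitely often, and the sitting
   helper of that state moves by self-loops; or no state is recurrent for both B_1 and
   the others, and then fewer than |B| states are recurrent. *)

Set Implicit Arguments.
Unset Strict Implicit.
Unset Printing Implicit Defensive.

Lemma interval_ind (P : nat -> Prop) N M : N <= M -> P N ->
  (forall i, N <= i < M -> P i -> P i.+1) -> P M.
Proof.
move/subnK <-; elim: (M - N) => //= d IH PN step.
rewrite addSn; apply: (step); first by rewrite leq_addl ltnSn.
apply: IH => // i /andP[h1 h2]; apply: step.
by rewrite h1 addSn ltnS ltnW.
Qed.

Lemma stable_between (T : Type) (g : nat -> T) N M :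
  N <= M -> (forall i, N <= i < M -> g i.+1 = g i) -> g M = g N.
Proof. by move=> hNM H; apply: (@interval_ind (fun i => g i = g N) N M) => // i /H ->. Qed.

(** * Stuttering invariance of LTL without next *)

Definition unit_step (s : nat -> nat) := forall N, s N <= s N.+1 <= (s N).+1.
Definition unbounded (s : nat -> nat) := forall i, exists N, i <= s N.

Section UnitStep.
Variable s : nat -> nat.
Hypotheses (s_unit : unit_step s) (s_unbounded : unbounded s).

Lemma unit_step_homo : {homo s : N M / N <= M}.
Proof. by apply: homo_leq leqnn leq_trans _ => N; case/andP: (s_unit N). Qed.

Lemma unit_step_first_hit N i : s N <= i ->
  exists N', [/\ N <= N', s N' = i & forall M, N <= M < N' -> s M < i].
Proof.
move=> hNi.
have [N0 hN0] := s_unbounded i.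
have ex : exists N', (N <= N') && (i <= s N').
  exists (maxn N N0); rewrite leq_maxl /=.
  by apply: leq_trans hN0 (unit_step_homo _); rewrite leq_maxr.
case: (ex_minnP ex) => N' /andP[hNN' hiN'] hmin.
have below M : N <= M < N' -> s M < i.
  by case/andP=> h1 h2; rewrite ltnNge; apply: contraTN h2 => h3; rewrite -leqNgt hmin ?h1.
exists N'; split=> //; apply/eqP; rewrite eqn_leq hiN' andbT.
move: hNN'; rewrite leq_eqVlt => /predU1P[<- //|ltNN'].
have eN' := ltn_predK ltNN'.
have : s N'.-1 < i by apply: below; rewrite -ltnS eN' ltNN' ?leqnn.
case/andP: (s_unit N'.-1); rewrite eN' => _ h1 h2; exact: leq_trans h1 h2.
Qed.
End UnitStep.

Lemma until_reindex (P1 P2 Q1 Q2 : nat -> Prop) s1 s2 :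
  unit_step s1 -> unit_step s2 -> unbounded s1 -> unbounded s2 ->
  (forall N, P1 (s1 N) -> Q1 (s2 N)) -> (forall N, P2 (s1 N) -> Q2 (s2 N)) ->
  forall N, (exists t, s1 N <= t /\ P2 t /\ forall k, s1 N <= k < t -> P1 k) ->
            (exists t, s2 N <= t /\ Q2 t /\ forall k, s2 N <= k < t -> Q1 k).
Proof.
move=> h1 h2 u1 u2 HP1 HP2 N [t [ht [hP2 hP1]]].
have [N' [hNN' e1 before]] := unit_step_first_hit h1 u1 ht.
exists (s2 N'); split; first exact: unit_step_homo.
split; first by apply: HP2; rewrite e1.
move=> k /andP[hk1 hk2].
have [N'' [hN'' e2 _]] := unit_step_first_hit h2 u2 hk1.
have lt : N'' < N'.
  by rewrite ltnNge; apply: contraTN hk2 => /(unit_step_homo h2); rewrite -e2 -leqNgt.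
rewrite -e2; apply: HP1; apply: hP1.
by rewrite (unit_step_homo h1 hN'') /= before // hN'' lt.
Qed.

Section LTLReindex.
Variables (QA QB SA SB : finType).

Definition same_atoms n1 n2 (c1 : config QA QB SA SB n1) (c2 : config QA QB SA SB n2) :=
  forall a, atom_holds c1 a <-> atom_holds c2 a.

Lemma ltl_sat_reindex n1 n2 (r1 : nat -> config QA QB SA SB n1)
    (r2 : nat -> config QA QB SA SB n2) s1 s2 :
  unit_step s1 -> unit_step s2 -> unbounded s1 -> unbounded s2 ->
  (forall N, same_atoms (r1 (s1 N)) (r2 (s2 N))) ->
  forall f N, ltl_sat r1 (s1 N) f <-> ltl_sat r2 (s2 N) f.
Proof.
move=> h1 h2 u1 u2 ha; elim=> [|a|f IH|f IHf g IHg|f IHf g IHg] N /=.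
- by [].
- exact: ha.
- by rewrite IH.
- by rewrite IHf IHg.
- split; [apply: (until_reindex h1 h2 u1 u2) | apply: (until_reindex h2 h1 u2 u1)] => M;
    by [rewrite IHf | rewrite IHg].
Qed.
End LTLReindex.

Section Enumeration.
Variable a : pred nat.
Hypothesis a_inf : forall N, exists M, (N <= M) && a M.

Definition next_true N := ex_minn (a_inf N).

Lemma next_trueP N : [/\ N <= next_true N, a (next_true N) &
  forall M, N <= M -> a M -> next_true N <= M].
Proof.
rewrite /next_true; case: ex_minnP => M /andP[h1 h2] h3; split=> // M' hM' aM'.
by apply: h3; rewrite hM' aM'.
Qed.

Lemma before_next_true N M : N <= M < next_true N -> ~~ a M.
Proof.
case/andP=> h1 h2; apply: contraTN h2 => aM.
by rewrite -leqNgt; case: (next_trueP N) => _ _; apply.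
Qed.

Lemma next_true_id N : a N -> next_true N = N.
Proof.
move=> aN; have [h1 _ h3] := next_trueP N.
by apply/eqP; rewrite eqn_leq h1 h3.
Qed.

Lemma next_trueS N : ~~ a N -> next_true N.+1 = next_true N.
Proof.
move=> naN; have [h1 h2 h3] := next_trueP N; have [g1 g2 g3] := next_trueP N.+1.
have hN : N < next_true N by rewrite ltn_neqAle h1 andbT; apply: contraNneq naN => ->.
by apply/eqP; rewrite eqn_leq g3 // h3 // ltnW.
Qed.

Fixpoint nth_true t := if t is t'.+1 then next_true (nth_true t').+1 else next_true 0.

Definition rank N := count a (iota 0 N).

Lemma rankS N : rank N.+1 = rank N + a N.
Proof. by rewrite /rank -addn1 iotaD count_cat /= addn0. Qed.

Lemma rank_unit_step : unit_step rank.
Proof. by move=> N; rewrite rankS; case: (a N); rewrite ?addn0 ?addn1 leqnSn leqnn. Qed.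

Lemma rank_next_true N : rank (next_true N) = rank N.
Proof.
have [h1 _ _] := next_trueP N.
apply: stable_between => // i /before_next_true na.
by rewrite rankS (negbTE na) addn0.
Qed.

Lemma nth_true_rank N : nth_true (rank N) = next_true N.
Proof.
elim: N => //= N IH; rewrite rankS.
case aN: (a N) => /=.
- by rewrite addn1 /= IH (next_true_id aN).
- by rewrite addn0 IH next_trueS // aN.
Qed.

Lemma nth_trueP t : a (nth_true t).
Proof.
by case: t => [|t]; [case: (next_trueP 0) | case: (next_trueP (nth_true t).+1)] => _ ->.
Qed.

Lemma rank_nth_true t : rank (nth_true t) = t.
Proof.
elim: t => [|t IH] /=; first by rewrite rank_next_true.
by rewrite rank_next_true rankS IH nth_trueP addn1.
Qed.

Lemma next_true_stable N M : N <= M -> (forall i, N <= i < M -> ~~ a i) ->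
  next_true M = next_true N.
Proof. by move=> hNM idle; apply: stable_between => // i /idle; apply: next_trueS. Qed.

Lemma rank_unbounded : unbounded rank.
Proof. by move=> t; exists (nth_true t); rewrite rank_nth_true. Qed.
End Enumeration.

Section FairRun.
Variables (QA QB SA SB : finType) (A : template QA QB QA SA) (B : template QA QB QB SB).
Variables (n : nat) (n_gt1 : 1 < n).
Variable x : nat -> config QA QB SA SB n.
Hypothesis x_fair : uncond_fair_run A B x.

(* Process index 0 is B_1, as in [atom_holds]. *)
Definition p0 : 'I_n := Ordinal (ltnW n_gt1).
Definition p1 : 'I_n := Ordinal n_gt1.

Definition sA m := (cs (x m)).1.
Definition sB m (i : 'I_n) := (cs (x m)).2 i.
Definition eA m := (ce (x m)).1.
Definition eB m (i : 'I_n) := (ce (x m)).2 i.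
Definition actor m := cp (x m).

Lemma x_step m : step A B (cs (x m)) (ce (x m)) (actor m) (cs (x m.+1)).
Proof. by case: x_fair => -[_ []]. Qed.

Lemma sA0 : sA 0 = t_init A.
Proof. by case: x_fair => -[[]]. Qed.

Lemma sB0 i : sB 0 i = t_init B.
Proof. by case: x_fair => -[[_ h]] _ _; apply: h. Qed.

Lemma actor_inf p m : exists m', m <= m' /\ actor m' = p.
Proof. by case: x_fair => _; apply. Qed.

Lemma sA_frame m : actor m <> None -> sA m.+1 = sA m.
Proof. by have := x_step m; rewrite /sA /actor; case: (cp (x m)) => //= i [g [q' [_ [_ []]]]]. Qed.

Lemma sB_frame m i : actor m <> Some i -> sB m.+1 i = sB m i.
Proof.
have := x_step m; rewrite /sB /actor; case: (cp (x m)) => [j|] /= [g [q' [_ [_ [_ ->]]]]] //.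
by case: eqP => // ->.
Qed.

Lemma input_frame m (p : proc n) : actor m <> p ->
  linput (ce (x m.+1)) p = linput (ce (x m)) p.
Proof. by case: x_fair => -[_ [_ frame]] _ hp; apply: frame => e; apply: hp; rewrite e. Qed.

Lemma eA_frame m : actor m <> None -> eA m.+1 = eA m.
Proof. by move/input_frame => []. Qed.

Lemma eB_frame m i : actor m <> Some i -> eB m.+1 i = eB m i.
Proof. by move/input_frame => []. Qed.

Lemma next_move j m : exists m', [/\ m <= m', actor m' = Some j, sB m' j = sB m j &
  forall k, m <= k < m' -> actor k <> Some j].
Proof.
have ex : exists k, (m <= k) && (actor k == Some j).
  by have [k [h1 h2]] := actor_inf (Some j) m; exists k; rewrite h1 h2 eqxx.
case: (ex_minnP ex) => m' /andP[h1 /eqP h2] h3.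
have idle k : m <= k < m' -> actor k <> Some j.
  case/andP=> a b /eqP e; have := h3 k; rewrite a e => /(_ isT).
  by rewrite leqNgt b.
exists m'; split => //.
by apply: (stable_between (g := sB^~ j)) => // k /idle; apply: sB_frame.
Qed.

Definition equivalent_run K : Prop := exists y : nat -> config QA QB SA SB K,
  uncond_fair_run A B y /\ forall f, ltl_sat y 0 f <-> ltl_sat x 0 f.

Fixpoint follower_state (g : nat -> option 'I_n) m : QB :=
  if m is m'.+1 then (if g m' is Some i then sB m i else follower_state g m')
  else t_init B.

Lemma eq_follower_state g1 g2 : g1 =1 g2 -> follower_state g1 =1 follower_state g2.
Proof. by move=> e; elim=> //= m ->; rewrite e. Qed.

Lemma follower_state_copy g m i : g m = Some i -> follower_state g m.+1 = sB m.+1 i.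
Proof. by move=> /= ->. Qed.

Lemma follower_state_idle g N M : N <= M -> (forall k, N <= k < M -> g k = None) ->
  follower_state g M = follower_state g N.
Proof. by move=> hNM idle; apply: stable_between => // k /idle /= ->. Qed.

(** * Simulation of a fair run by a run with K copies of B *)

Section Simulation.
Variables (K : nat) (K_gt0 : 0 < K).
Variable sched : 'I_K -> nat -> option 'I_n.
Variable extra : nat -> option ('I_K * SB * {set QA + QB}).

Definition h0 : 'I_K := Ordinal K_gt0.
Definition hstate h m := follower_state (sched h) m.
Definition follows_actor (h : 'I_K) m : bool :=
  if actor m is Some i then sched h m == Some i else false.
Definition block_start m : gstate QA QB K :=
  (sA m, fun h => if val h == 0 then sB m p0 else hstate h m).

Hypothesis sched_state : forall h m i, val h != 0 -> sched h m = Some i ->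
  val i != 0 /\ hstate h m = sB m i.
Hypothesis idle_cover : forall m (i : 'I_n), val i != 0 -> actor m <> Some i ->
  exists h : 'I_K, [/\ val h != 0, ~~ follows_actor h m & hstate h m = sB m i].
Hypothesis extra_enabled : forall m h sg g, extra m = Some (h, sg, g) ->
  [/\ val h != 0, (hstate h m, sg, g, hstate h m) \in t_delta B &
      exists p : proc K, p <> Some h /\ lstate (block_start m) p \in g].
Hypothesis helper_fair : forall h : 'I_K, val h != 0 -> forall m, exists m', m <= m' /\
  (follows_actor h m' \/ exists sg g, extra m' = Some (h, sg, g)).

Lemma hstateS h m : hstate h m.+1 = if sched h m is Some i then sB m.+1 i else hstate h m.
Proof. by []. Qed.

Lemma hstate_idle h m : val h != 0 -> ~~ follows_actor h m -> hstate h m.+1 = hstate h m.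
Proof.
rewrite hstateS /follows_actor => hh; case e: (sched h m) => [i|] // hm.
have [_ ->] := sched_state hh e; apply: sB_frame => em; by rewrite em eqxx in hm.
Qed.

Lemma h0_eq (h : 'I_K) : val h == 0 -> h = h0.
Proof. by move=> /eqP e; apply: val_inj. Qed.

Lemma p0_eq (i : 'I_n) : val i == 0 -> i = p0.
Proof. by move=> /eqP e; apply: val_inj. Qed.

(* Step m of x is expanded into the positions m * K.+1 + s, s <= K: at slot 0 a helper
   may perform the self-loop [extra m], at slot s in 1 .. K-1 helper s copies the move of
   x if it follows the actor, and at slot K the copy of A or B_1 does.  Positions where
   nobody moves are skipped by [sim_pos]. *)
Definition block N := N %/ K.+1.
Definition slot N := N %% K.+1.

Lemma slot_leq N : slot N <= K.
Proof. by rewrite -ltnS ltn_mod. Qed.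

Lemma block_pos m s : s <= K -> block (m * K.+1 + s) = m.
Proof. by move=> hs; rewrite /block divnMDl // divn_small // addn0. Qed.

Lemma slot_pos m s : s <= K -> slot (m * K.+1 + s) = s.
Proof. by move=> hs; rewrite /slot modnMDl modn_small. Qed.

Lemma posE N : N = block N * K.+1 + slot N.
Proof. exact: divn_eq. Qed.

Lemma posS_lt N : slot N < K -> block N.+1 = block N /\ slot N.+1 = (slot N).+1.
Proof. by move=> h; rewrite {1 3}(posE N) -addnS block_pos // slot_pos. Qed.

Lemma posS_eq N : slot N = K -> block N.+1 = (block N).+1 /\ slot N.+1 = 0.
Proof.
move=> h; have -> : N.+1 = (block N).+1 * K.+1 + 0.
  by rewrite addn0 mulSn addnC -{2}h addnS -posE.
by rewrite block_pos // slot_pos.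
Qed.

Lemma leq_block N m : block N < m -> N <= m * K.+1.
Proof.
move=> h; apply: leq_trans (_ : (block N).+1 * K.+1 <= _); last by rewrite leq_mul2r h orbT.
by rewrite mulSn addnC {1}(posE N) leq_add2l ltnW // ltnS slot_leq.
Qed.

Lemma block_unit_step : unit_step block.
Proof.
move=> N; have := slot_leq N; rewrite leq_eqVlt => /predU1P[/posS_eq|/posS_lt] [-> _].
  by rewrite leqnSn leqnn.
by rewrite leqnn leqnSn.
Qed.

Lemma block_unbounded : unbounded block.
Proof. by move=> i; exists (i * K.+1 + 0); rewrite block_pos. Qed.

Definition main_mover m : option (proc K) :=
  match actor m with
  | None => Some None
  | Some i => if val i == 0 then Some (Some h0) else None
  end.

Definition mover N : option (proc K) :=
  let m := block N in
  if slot N == 0 then (if extra m is Some (h, _, _) then Some (Some h) else None)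
  else if (insub (slot N) : option 'I_K) is Some h then
    (if follows_actor h m then Some (Some h) else None)
  else main_mover m.

Lemma mover_main m : mover (m * K.+1 + K) = main_mover m.
Proof.
rewrite /mover block_pos // slot_pos // insubN ?ltnn //.
by case: eqP => // eK; exfalso; move: K_gt0; rewrite eK.
Qed.

Lemma mover_helper m (h : 'I_K) : val h != 0 ->
  mover (m * K.+1 + val h) = if follows_actor h m then Some (Some h) else None.
Proof.
have hs : val h <= K by exact: ltnW (ltn_ord h).
by move=> hh; rewrite /mover block_pos // slot_pos // (negbTE hh) valK.
Qed.

Lemma mover_extra m :
  mover (m * K.+1 + 0) = if extra m is Some (h, _, _) then Some (Some h) else None.
Proof. by rewrite /mover block_pos // slot_pos. Qed.

Lemma mover_inf p N : exists N', N <= N' /\ mover N' = Some p.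
Proof.
have in_block m s : block N < m -> N <= m * K.+1 + s.
  by move=> hm; apply: leq_trans (leq_block hm) (leq_addr _ _).
case: p => [h|].
- case: (boolP (val h == 0)) => hh.
  + have [m [hm e]] := actor_inf (Some p0) (block N).+1.
    exists (m * K.+1 + K); rewrite mover_main /main_mover e /= (h0_eq hh); split => //.
    exact: in_block.
  + have [m [hm [e|[sg [g e]]]]] := helper_fair hh (block N).+1.
    * by exists (m * K.+1 + val h); rewrite mover_helper // e; split => //; apply: in_block.
    * by exists (m * K.+1 + 0); rewrite mover_extra e; split => //; apply: in_block.
- have [m [hm e]] := actor_inf None (block N).+1.
  by exists (m * K.+1 + K); rewrite mover_main /main_mover e; split => //; apply: in_block.
Qed.

Lemma block_step N : block N.+1 = block N \/
  [/\ slot N = K, mover N = main_mover (block N) & block N.+1 = (block N).+1].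
Proof.
have := slot_leq N; rewrite leq_eqVlt => /predU1P[hK|/posS_lt [-> _]]; last by left.
right; have [e _] := posS_eq hK; split => //.
by rewrite {1}(posE N) hK mover_main.
Qed.

Definition active N := mover N != None.

Lemma active_inf N : exists N', (N <= N') && active N'.
Proof. by have [N' [h1 h2]] := mover_inf None N; exists N'; rewrite h1 /active h2. Qed.

Lemma helper_moves_inf (h : 'I_K) N : exists N', (N <= N') && (mover N' == Some (Some h)).
Proof. by have [N' [h1 h2]] := mover_inf (Some h) N; exists N'; rewrite h1 h2 eqxx. Qed.

Definition pos_state N : gstate QA QB K :=
  (sA (block N), fun h => if val h == 0 then sB (block N) p0
                          else if val h < slot N then hstate h (block N).+1
                          else hstate h (block N)).

Definition move_input N : SB :=
  if slot N == 0 then (if extra (block N) is Some (_, sg, _) then sg else eB 0 p0)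
  else if actor (block N) is Some i then eB (block N) i else eB 0 p0.

(* A helper reads, from one of its moves to the next, the input of its next move. *)
Definition pos_input N : ginput SA SB K :=
  (eA (block N), fun h => if val h == 0 then eB (block N) p0
                          else move_input (next_true (helper_moves_inf h) N)).

Lemma pos_state_idle N : ~~ active N -> pos_state N.+1 = pos_state N.
Proof.
rewrite /active negbK => /eqP hm.
have := slot_leq N; rewrite leq_eqVlt => /predU1P[hK|hK].
- have [e1 e2] := posS_eq hK.
  move: hm; rewrite {1}(posE N) hK mover_main /main_mover => hm.
  have hA : actor (block N) <> None by move=> e; rewrite e in hm.
  have hB : actor (block N) <> Some p0 by move=> e; rewrite e in hm.
  rewrite /pos_state e1 e2 hK sA_frame // sB_frame //; congr pair; apply: funext => h.
  by rewrite ltn_ord.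
- have [e1 e2] := posS_lt hK.
  rewrite /pos_state e1 e2; congr pair; apply: funext => h.
  case: eqP => // /eqP hh; rewrite ltnS leq_eqVlt; case: eqP => //= hs.
  move: hm; rewrite {1}(posE N) -hs mover_helper //.
  by case: ifP => // /negbT mv _; rewrite ltnn hstate_idle.
Qed.

Lemma pos_state_between N M : N <= M -> (forall i, N <= i < M -> ~~ active i) ->
  pos_state M = pos_state N.
Proof. by move=> hNM idle; apply: stable_between => // i /idle /pos_state_idle. Qed.

Lemma pos_state_idle_helper N h : val h != 0 -> ~~ follows_actor h (block N) ->
  (pos_state N).2 h = hstate h (block N).
Proof.
by move=> hh hm; rewrite /pos_state /= (negbTE hh); case: ifP => // _; rewrite hstate_idle.
Qed.

Lemma pos_state_block_start N : slot N = 0 -> pos_state N = block_start (block N).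
Proof. by move=> hs; rewrite /pos_state /block_start hs. Qed.

Definition mirrors (q : proc K) m : Prop :=
  match q with
  | None => actor m = None
  | Some h => if val h == 0 then actor m = Some p0 else follows_actor h m
  end.

Lemma guard_transfer N (q : proc K) g : mirrors q (block N) ->
  guard_sat (cs (x (block N))) (actor (block N)) g -> guard_sat (pos_state N) q g.
Proof.
move=> hq [[i|] [hi hin]].
- case: (boolP (val i == 0)) => hi0.
  + exists (Some h0); split; last by rewrite /= (p0_eq hi0) in hin.
    by move=> eq; move: hq; rewrite -eq /= => e; apply: hi; rewrite e (p0_eq hi0).
  + have [h [hh hm he]] := idle_cover hi0 (nesym hi).
    exists (Some h); split.
      by move=> eq; move: hq; rewrite -eq /= (negbTE hh); apply/negP.
    by change (inr ((pos_state N).2 h) \in g); rewrite pos_state_idle_helper // he.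
- exists None; split => //.
  by case: q hq => // hq _; apply: hi; rewrite hq.
Qed.

Lemma next_move_id N h : mover N = Some (Some h) -> next_true (helper_moves_inf h) N = N.
Proof. by move=> hm; apply: next_true_id; rewrite hm eqxx. Qed.

Lemma step_main N p : slot N = K -> main_mover (block N) = Some p ->
  step A B (pos_state N) (pos_input N) p (pos_state N.+1).
Proof.
move=> hK; have [e1 e2] := posS_eq hK; rewrite /main_mover.
have := x_step (block N); have := @guard_transfer N.
case em: (actor (block N)) => [i|] transfer.
- case: ifP => // /p0_eq ei; subst i => -[g [q' [hd [hg [h1 h2]]]]] [<-].
  exists g, q'; split; [by [] | split; [|split]].
  + by apply: transfer hg; rewrite /= em.
  + by rewrite /pos_state e1 /sA h1.
  + move=> j; rewrite /pos_state e1 e2 hK /=; case: (boolP (val j == 0)) => hj.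
    * by rewrite (h0_eq hj) eqxx /sB h2 eqxx.
    * by rewrite ltn_ord; case: eqP => // ej; rewrite ej eqxx in hj.
- move=> [g [q' [hd [hg [h1 h2]]]]] [<-].
  exists g, q'; split; [by [] | split; [|split]].
  + by apply: transfer hg; rewrite /= em.
  + by rewrite /pos_state e1 /sA h1.
  + by move=> j; rewrite /pos_state e1 e2 hK /=; case: ifP => _; rewrite ?ltn_ord // /sB h2.
Qed.

Lemma step_extra N p : slot N = 0 -> mover N = Some p ->
  step A B (pos_state N) (pos_input N) p (pos_state N.+1).
Proof.
move=> hs hm; have [e1 e2] : block N.+1 = block N /\ slot N.+1 = 1.
  by rewrite -hs; apply: posS_lt; rewrite hs.
move: hm (hm); rewrite {1}(posE N) hs mover_extra.
case ee: (extra (block N)) => [[[h sg] g]|] // [<-] hm.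
have [hh hd [p' [hp' hin]]] := extra_enabled ee.
exists g, (hstate h (block N)); split; [|split; [|split]].
- by rewrite /pos_state /pos_input /= next_move_id // (negbTE hh) hs ltn0 /move_input hs ee.
- by exists p'; rewrite pos_state_block_start.
- by rewrite /pos_state e1.
- move=> j; rewrite /pos_state e1 e2 hs /= ltnS leqn0.
  by case: (eqVneq j h) => [->|_]; [rewrite (negbTE hh) | case: (val j == 0)].
Qed.

Lemma step_helper N (h : 'I_K) : val h = slot N -> val h != 0 ->
  follows_actor h (block N) -> step A B (pos_state N) (pos_input N) (Some h) (pos_state N.+1).
Proof.
move=> hs hh mv; have [e1 e2] : block N.+1 = block N /\ slot N.+1 = (slot N).+1.
  by apply: posS_lt; rewrite -hs ltn_ord.
have hm : mover N = Some (Some h) by rewrite {1}(posE N) -hs mover_helper // mv.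
move: (mv); rewrite /follows_actor; case em: (actor (block N)) => [i|] // /eqP ef.
have [_ hst] := sched_state hh ef.
have := x_step (block N); rewrite em => -[g [q' [hd [hg [h1 h2]]]]].
exists g, q'; split; [|split; [|split]].
- rewrite /pos_state /pos_input /= next_move_id // (negbTE hh) -hs ltnn hst.
  by rewrite /move_input -hs (negbTE hh) em.
- by apply: guard_transfer; rewrite ?em // /mirrors (negbTE hh).
- by rewrite /pos_state e1.
- have hh' : (h == 0 :> nat) = false := negbTE hh.
  move=> j; rewrite /pos_state e1 e2 /= -hs.
  case: (eqVneq j h) => [->|hj]; first by rewrite hh' ltnSn hstateS ef /sB h2 eqxx.
  by case: ifP => // _; rewrite ltnS leq_eqVlt (inj_eq val_inj) (negbTE hj).
Qed.

Lemma step_mover N p : mover N = Some p ->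
  step A B (pos_state N) (pos_input N) p (pos_state N.+1).
Proof.
have := slot_leq N; rewrite leq_eqVlt => /predU1P[hK|hK].
  by rewrite {1}(posE N) hK mover_main; apply: step_main.
case: (eqVneq (slot N) 0) => hs; first exact: step_extra.
pose h := Ordinal hK; have hh : val h != 0 by [].
rewrite {1}(posE N) -[slot N]/(val h) mover_helper //.
by case: ifP => // mv [<-]; apply: step_helper.
Qed.

Lemma A_stable N M : N <= M -> (forall i, N <= i < M -> mover i <> Some None) ->
  (sA (block M), eA (block M)) = (sA (block N), eA (block N)).
Proof.
move=> hNM idle; apply: (stable_between (g := fun N => (sA (block N), eA (block N)))) => //.
move=> i /idle hi; case: (block_step i) => [-> // | [_ hm ->]].
have ha : actor (block i) <> None by move=> e; apply: hi; rewrite hm /main_mover e.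
by rewrite sA_frame // eA_frame.
Qed.

Lemma B1_stable N M : N <= M -> (forall i, N <= i < M -> mover i <> Some (Some h0)) ->
  (sB (block M) p0, eB (block M) p0) = (sB (block N) p0, eB (block N) p0).
Proof.
move=> hNM idle.
apply: (stable_between (g := fun N => (sB (block N) p0, eB (block N) p0))) => //.
move=> i /idle hi; case: (block_step i) => [-> // | [_ hm ->]].
have hb : actor (block i) <> Some p0 by move=> e; apply: hi; rewrite hm /main_mover e.
by rewrite sB_frame // eB_frame.
Qed.

Definition sim_pos := nth_true active_inf.

Definition sim_run t : config QA QB SA SB K :=
  (pos_state (sim_pos t), pos_input (sim_pos t), odflt None (mover (sim_pos t))).

Lemma mover_sim_pos t : mover (sim_pos t) = Some (cp (sim_run t)).
Proof. by have := nth_trueP active_inf t; rewrite /active /cp /=; case: mover. Qed.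

Lemma idle_until_next t i : sim_pos t < i < sim_pos t.+1 -> mover i = None.
Proof. by move/before_next_true; rewrite negbK => /eqP. Qed.

Lemma pos_state_sim_posS t : pos_state (sim_pos t.+1) = pos_state (sim_pos t).+1.
Proof.
have [h1 _ _] := next_trueP active_inf (sim_pos t).+1.
by apply: pos_state_between => // i /before_next_true.
Qed.

Lemma sim_initial : is_initial A B (cs (sim_run 0)).
Proof.
rewrite /cs /= /sim_pos /=; have [h1 _ _] := next_trueP active_inf 0.
rewrite (pos_state_between h1 (@before_next_true _ active_inf 0)).
by split => [|h]; rewrite /pos_state /= ?sA0 //; case: ifP; rewrite ?sB0.
Qed.

Lemma sim_step t :
  step A B (cs (sim_run t)) (ce (sim_run t)) (cp (sim_run t)) (cs (sim_run t.+1)).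
Proof. by rewrite /cs /= pos_state_sim_posS; apply: step_mover; rewrite mover_sim_pos. Qed.

Lemma sim_input_frame t (p : proc K) : p <> cp (sim_run t) ->
  linput (ce (sim_run t.+1)) p = linput (ce (sim_run t)) p.
Proof.
move=> hp; have hle : sim_pos t <= sim_pos t.+1.
  by have [h1 _ _] := next_trueP active_inf (sim_pos t).+1; apply: ltnW.
have idle i : sim_pos t <= i < sim_pos t.+1 -> mover i <> Some p.
  case/andP; rewrite leq_eqVlt => /predU1P[<- _|lt1 lt2].
    by rewrite mover_sim_pos => -[e]; apply: hp.
  by rewrite (idle_until_next (t := t)) // lt1.
rewrite /ce /=; case: p hp idle => [h|] _ idle /=; last first.
  by case: (A_stable hle idle) => _ ->.
rewrite /pos_input /=; case: (boolP (val h == 0)) => hh.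
  by rewrite (h0_eq hh) in idle *; case: (B1_stable hle idle) => _ ->.
by rewrite (next_true_stable _ hle) // => i /idle /eqP.
Qed.

Lemma sim_fair p t : exists t', t <= t' /\ cp (sim_run t') = p.
Proof.
have [N [h1 h2]] := mover_inf p (sim_pos t).
exists (rank active N); split.
- by rewrite -{1}(rank_nth_true active_inf t) (unit_step_homo (rank_unit_step _)).
- move: (mover_sim_pos (rank active N)); rewrite /sim_pos nth_true_rank next_true_id ?h2 //.
  + by case.
  + by rewrite /active h2.
Qed.

Lemma same_atoms_sim N : same_atoms (x (block N)) (sim_run (rank active N)).
Proof.
rewrite /sim_run /sim_pos nth_true_rank; have [h1 _ _] := next_trueP active_inf N.
have idle p i : N <= i < next_true active_inf N -> mover i <> Some p.
  by move/before_next_true; rewrite negbK => /eqP ->.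
case: (A_stable h1 (idle None)) => eA1 eA2.
case: (B1_stable h1 (idle (Some h0))) => eB1 eB2.
case=> [q|s|q|s] /=.
- by rewrite -/(sA (block N)) -eA1.
- by rewrite -/(eA (block N)) -eA2.
- split=> -[i [hi e]].
  + by exists h0; rewrite eqxx eB1 -e (p0_eq (introT eqP hi)).
  + by exists p0; move: e; rewrite (h0_eq (introT eqP hi)) /= eB1.
- split=> -[i [hi e]].
  + by exists h0; rewrite eqxx eB2 -e (p0_eq (introT eqP hi)).
  + by exists p0; move: e; rewrite (h0_eq (introT eqP hi)) /= eB2.
Qed.

Lemma simulation_run : equivalent_run K.
Proof.
exists sim_run; split.
  split; last exact: sim_fair.
  by split; [exact: sim_initial | split; [exact: sim_step | exact: sim_input_frame]].
move=> f; symmetry.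
have := ltl_sat_reindex block_unit_step (rank_unit_step active) block_unbounded
  (rank_unbounded active_inf) same_atoms_sim f 0.
by rewrite /block div0n.
Qed.

End Simulation.

(** * Visited and recurrent states *)

Definition occupied q m : bool := [exists i : 'I_n, (val i != 0) && (sB m i == q)].
Definition visited : {set QB} := [set q | `[< exists m, occupied q m >]].
Definition recurrent_at (i : 'I_n) : {set QB} :=
  [set q | `[< forall m, exists m', m <= m' /\ sB m' i = q >]].
Definition recurrent : {set QB} :=
  [set q | [exists i : 'I_n, (val i != 0) && (q \in recurrent_at i)]].

Lemma recurrent_atP i q : q \in recurrent_at i -> forall m, exists m', m <= m' /\ sB m' i = q.
Proof. by rewrite inE => /asboolP. Qed.

Lemma visitedP m (i : 'I_n) : val i != 0 -> sB m i \in visited.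
Proof.
by move=> hi; rewrite inE; apply/asboolP; exists m; apply/existsP; exists i; rewrite hi eqxx.
Qed.

Lemma recurrent_atW (i : 'I_n) q : val i != 0 -> q \in recurrent_at i -> q \in recurrent.
Proof. by move=> hi hq; rewrite inE; apply/existsP; exists i; rewrite hi hq. Qed.

Lemma recurrent_visited q : q \in recurrent -> q \in visited.
Proof.
rewrite inE => /existsP[i /andP[hi /recurrent_atP hq]].
by have [m [_ <-]] := hq 0; apply: visitedP.
Qed.

Lemma ex_settle_time : exists T, forall m i, T <= m -> sB m i \in recurrent_at i.
Proof.
have late (a : 'I_n * QB) :
    exists T, forall m, T <= m -> sB m a.1 = a.2 -> a.2 \in recurrent_at a.1.
  case: a => i q /=; case: (boolP (q \in recurrent_at i)) => hq; first by exists 0.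
  have : ~ (forall m, exists m', m <= m' /\ sB m' i = q).
    by move=> H; move: hq; rewrite inE; case: asboolP.
  by move/existsNP => [T HT]; exists T => m hm e; exfalso; apply: HT; exists m.
have [T HT] := fin_all_exists late.
exists (\max_a T a) => m i hm.
by apply: (HT (i, sB m i) m) => //=; apply: leq_trans hm; apply: (leq_bigmax (i, sB m i)).
Qed.

Definition settle_time := sval (cid ex_settle_time).

Lemma settle_timeP m i : settle_time <= m -> sB m i \in recurrent_at i.
Proof. exact: (svalP (cid ex_settle_time)). Qed.

Lemma occupied_transient q m (i : 'I_n) : q \notin recurrent -> val i != 0 -> sB m i = q ->
  m < settle_time.
Proof.
move=> hI hi e; rewrite ltnNge; apply: contra hI => /(settle_timeP i).
by rewrite e; apply: recurrent_atW.
Qed.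

Lemma ex_first_occ q : exists F : nat * 'I_n, q \in visited ->
  [/\ val F.2 != 0, sB F.1 F.2 = q & forall m i, val i != 0 -> sB m i = q -> F.1 <= m].
Proof.
case: (boolP (q \in visited)) => hV; last by exists (0, p0).
have ex : exists m, occupied q m by move: hV; rewrite inE => /asboolP.
case: (ex_minnP ex) => m /existsP[i /andP[hi /eqP e]] hmin.
exists (m, i) => _; split => // m' i' hi' e'.
by apply: hmin; apply/existsP; exists i'; rewrite hi' e' eqxx.
Qed.

Definition first_occ q := (sval (cid (ex_first_occ q))).1.
Definition first_occupant q := (sval (cid (ex_first_occ q))).2.

Lemma first_occupantP q : q \in visited ->
  val (first_occupant q) != 0 /\ sB (first_occ q) (first_occupant q) = q.
Proof. by move=> hV; have [] := svalP (cid (ex_first_occ q)) hV. Qed.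

Lemma first_occ_min q m (i : 'I_n) : val i != 0 -> sB m i = q -> first_occ q <= m.
Proof.
move=> hi e; have hV : q \in visited by rewrite -e visitedP.
by have [_ _ min] := svalP (cid (ex_first_occ q)) hV; apply: min hi e.
Qed.

Definition stable_time := maxn settle_time (\max_(q : QB) first_occ q).

Lemma first_occ_stable q : first_occ q <= stable_time.
Proof. by apply: leq_trans (leq_bigmax q) (leq_maxr _ _). Qed.

Lemma settle_stable : settle_time <= stable_time.
Proof. exact: leq_maxl. Qed.

Lemma ex_last_occ q : exists L : nat * 'I_n, q \in visited -> q \notin recurrent ->
  [/\ first_occ q <= L.1, val L.2 != 0, sB L.1 L.2 = q, actor L.1 = Some L.2 &
      forall m (i : 'I_n), val i != 0 -> sB m i = q -> m <= L.1].
Proof.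
case: (boolP (q \in visited)) => hV; last by exists (0, p0).
case: (boolP (q \in recurrent)) => hI; first by exists (0, p0).
have [hf1 hf2] := first_occupantP hV.
have ex : exists m, occupied q m.
  by exists (first_occ q); apply/existsP; exists (first_occupant q); rewrite hf1 hf2 eqxx.
have ub m : occupied q m -> m <= settle_time.
  by case/existsP=> i /andP[hi /eqP e]; apply: ltnW; apply: occupied_transient e.
case: (ex_maxnP ex ub) => L /existsP[i /andP[hi /eqP e]] hmax.
have hlast m (j : 'I_n) : val j != 0 -> sB m j = q -> m <= L.
  by move=> hj ej; apply: hmax; apply/existsP; exists j; rewrite hj ej eqxx.
exists (L, i) => _ _ /=; split => //; first exact: hlast hf2.
apply/eqP; apply: contraT => /eqP hne.
by have := hlast L.+1 i hi; rewrite sB_frame ?e // ltnn => /(_ erefl).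
Qed.

Definition last_occ q := (sval (cid (ex_last_occ q))).1.
Definition last_occupant q := (sval (cid (ex_last_occ q))).2.

Lemma last_occP q : q \in visited -> q \notin recurrent ->
  [/\ first_occ q <= last_occ q, val (last_occupant q) != 0,
      sB (last_occ q) (last_occupant q) = q, actor (last_occ q) = Some (last_occupant q) &
      forall m (i : 'I_n), val i != 0 -> sB m i = q -> m <= last_occ q].
Proof. exact: (svalP (cid (ex_last_occ q))). Qed.

Lemma ex_recurrer r : exists i : 'I_n, r \in recurrent -> val i != 0 /\ r \in recurrent_at i.
Proof.
case: (boolP (r \in recurrent)) => hI; last by exists p0.
by move: (hI); rewrite inE => /existsP[i /andP[hi hr]]; exists i.
Qed.

Definition recurrer r := sval (cid (ex_recurrer r)).

Lemma recurrerP r : r \in recurrent -> val (recurrer r) != 0 /\ r \in recurrent_at (recurrer r).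
Proof. exact: (svalP (cid (ex_recurrer r))). Qed.

(** * Assigning helpers to states *)

(* A self-loop at q whose guard is witnessed by a process that the small system copies
   at the start of block m: A, B_1, or an idle process outside q. *)
Definition loop_guard q m (sg : SB * {set QA + QB}) : Prop :=
  (q, sg.1, sg.2, q) \in t_delta B /\
  (inl (sA m) \in sg.2 \/ inr (sB m p0) \in sg.2 \/
   exists i : 'I_n, [/\ val i != 0, actor m <> Some i, sB m i <> q & inr (sB m i) \in sg.2]).

Definition loop_enabled q m : Prop := exists sg, loop_guard q m sg.

Inductive role := Sitting of QB | Floating of QB.

(* A recurrent state q is served by the floating helper of [rep q], which follows
   [leader (rep q)]; the state [spec], if any, has no floating helper and its sitting
   helper moves by self-loops instead. *)
Section Schedule.
Variables (K : nat) (K_gt0 : 0 < K).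
Variables (rep : QB -> QB) (leader : QB -> 'I_n) (spec : option QB).
Hypothesis rep_recurrent : forall q, q \in recurrent ->
  rep q \in recurrent /\ rep (rep q) = rep q.
Hypothesis rep_nonspec : forall q, q \in recurrent -> Some q != spec -> Some (rep q) != spec.
Hypothesis leader_neq0 : forall r, r \in recurrent -> val (leader r) != 0.
Hypothesis leader_visits : forall q, q \in recurrent -> Some q != spec ->
  forall m, exists m', m <= m' /\ sB m' (leader (rep q)) = q.
Hypothesis spec_loops : forall q, spec = Some q ->
  q \in recurrent /\ forall m, exists m', [/\ m <= m', stable_time <= m' & loop_enabled q m'].

(* The helper sitting on a recurrent state q and the helper floating with the leader of
   [rep q] exchange roles whenever that leader moves while in q: the floating one stays
   in q and the sitting one follows the move, so both keep moving and q stays covered. *)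
Definition swap m : option QB :=
  if stable_time <= m then
    (if actor m is Some j then
       (let q := sB m j in
        if [&& val j != 0, q \in recurrent, Some q != spec & leader (rep q) == j]
        then Some q else None)
     else None)
  else None.

Lemma swapP m q : swap m = Some q ->
  [/\ stable_time <= m, q \in recurrent, Some q != spec, actor m = Some (leader (rep q)) &
      sB m (leader (rep q)) = q].
Proof.
rewrite /swap; case: ifP => // hT; case e: (actor m) => [j|] //.
by case: ifP => // /and4P[hj hq hs /eqP hl] [<-]; split => //; rewrite hl.
Qed.

Definition update_role (sw : option QB) (r : role) : role :=
  match r, sw with
  | Sitting q, Some q0 => if q == q0 then Floating (rep q) else Sitting q
  | Floating r, Some q0 => if rep q0 == r then Sitting q0 else Floating r
  | r, None => r
  end.

Lemma update_sitting m q : swap m != Some q -> update_role (swap m) (Sitting q) = Sitting q.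
Proof. by case: (swap m) => //= q0 ne; case: eqP => // eq; rewrite eq eqxx in ne. Qed.

(* Labels of helpers: [inl q] floods the state q, [inr r] floats with the leader of r. *)
Fixpoint role_of (lb : QB + QB) m : role :=
  if m is m'.+1 then update_role (swap m') (role_of lb m')
  else match lb with inl q => Sitting q | inr r => Floating r end.

Definition role_target (lb : QB + QB) m : option 'I_n :=
  match role_of lb m with
  | Floating r => if swap m is Some q0 then (if rep q0 == r then None else Some (leader r))
                  else Some (leader r)
  | Sitting q => if swap m == Some q then Some (leader (rep q))
                 else if (lb == inl q) && (m < first_occ q) then Some (first_occupant q)
                 else None
  end.

Definition label_sched (lb : QB + QB) m : option 'I_n :=
  match lb with
  | inl q =>
      if q \in recurrent then
        (if Some q == spec then (if m < first_occ q then Some (first_occupant q) else None)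
         else role_target lb m)
      else if m < first_occ q then Some (first_occupant q)
      else if m < last_occ q then None else Some (last_occupant q)
  | inr r => role_target lb m
  end.

Definition label_state lb m := follower_state (label_sched lb) m.

Lemma label_stateS lb m :
  label_state lb m.+1 = if label_sched lb m is Some i then sB m.+1 i else label_state lb m.
Proof. by []. Qed.

Definition role_ok (r : role) : bool :=
  match r with
  | Sitting q => (q \in recurrent) && (Some q != spec)
  | Floating r => [&& r \in recurrent, rep r == r & Some r != spec]
  end.

Definition generic (lb : QB + QB) := role_ok (role_of lb 0).

Lemma role_ok_update m r : role_ok r -> role_ok (update_role (swap m) r).
Proof.
case: r => [q|r] /=.
- case/andP=> hq hs; case e: (swap m) => [q0|] /=; last by rewrite hq hs.
  case: eqP => [eq|_] /=; last by rewrite hq hs.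
  by have [h1 h2] := rep_recurrent hq; rewrite h1 h2 eqxx rep_nonspec.
- case/and3P=> h1 h2 h3; case e: (swap m) => [q0|] /=; last by rewrite h1 h2 h3.
  case: eqP => [eq|_] /=; last by rewrite h1 h2 h3.
  by have [? ? ? _ _] := swapP e; apply/andP.
Qed.

Lemma label_sched_generic lb m : generic lb -> label_sched lb m = role_target lb m.
Proof. by case: lb => [q|r] //; rewrite /generic /= => /andP[hq hs]; rewrite hq (negbTE hs). Qed.

Definition role_state lb m : Prop :=
  match role_of lb m with
  | Floating r => label_state lb m = sB m (leader r)
  | Sitting q => (first_occ q <= m -> label_state lb m = q) /\
                 (m < first_occ q -> lb = inl q /\ label_state lb m = sB m (first_occupant q))
  end.

Lemma role_state0 lb : generic lb -> role_state lb 0.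
Proof.
rewrite /role_state; case: lb => [q|r] /= hg; rewrite /label_state /= ?sB0 //.
split=> [|//]; rewrite leqn0 => /eqP e.
by have [_ <-] := first_occupantP (recurrent_visited (proj1 (andP hg))); rewrite e sB0.
Qed.

Lemma role_invariant lb m : generic lb -> role_ok (role_of lb m) /\ role_state lb m.
Proof.
move=> hg; elim: m => [|m [ok IH]]; first by split; last exact: role_state0.
split; first exact: role_ok_update.
rewrite /role_state /= label_stateS label_sched_generic // /role_target.
move: ok IH; rewrite /role_state; case: (role_of lb m) => [q|r] ok IH.
- case: (eqVneq (swap m) (Some q)) => [e|ne]; first by rewrite e /= eqxx.
  have [IH1 IH2] := IH; rewrite update_sitting //=.
  case: ifP => [/andP[/eqP el hm]|hn]; split => hf //.
  + have -> : m.+1 = first_occ q by apply/eqP; rewrite eqn_leq hm hf.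
    by have [_ ->] := first_occupantP (recurrent_visited (proj1 (andP ok))).
  + case: (ltnP m (first_occ q)) => hmf; last exact: IH1.
    by have [el _] := IH2 hmf; rewrite el eqxx hmf in hn.
  + by have [el _] := IH2 (ltnW hf); rewrite el eqxx (ltnW hf) in hn.
- case e: (swap m) => [q0|] //=; case: eqP => [er|_] //=.
  have [hT _ _ _ hsb] := swapP e.
  split => hf; first by rewrite IH -er hsb.
  by move: (leq_trans (first_occ_stable q0) hT); rewrite leqNgt ltnW.
Qed.

Lemma roles_taken m :
  (forall q, q \in recurrent -> Some q != spec ->
     exists lb, generic lb /\ role_of lb m = Sitting q) /\
  (forall r, r \in recurrent -> rep r = r -> Some r != spec ->
     exists lb, generic lb /\ role_of lb m = Floating r).
Proof.
elim: m => [|m [IH1 IH2]].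
  split=> [q hq hs|r hr er hs]; first by exists (inl q); rewrite /generic /= hq hs.
  by exists (inr r); rewrite /generic /= hr er eqxx hs.
case e: (swap m) => [q0|]; last first.
  split=> [q hq hs|r hr er hs].
    by have [lb [g r]] := IH1 q hq hs; exists lb; rewrite /= r e.
  by have [lb [g r']] := IH2 r hr er hs; exists lb; rewrite /= r' e.
have [hT hq0 hs0 hmu hsb] := swapP e; have [hr1 hr2] := rep_recurrent hq0.
split=> [q hq hs|r hr er hs].
- case: (eqVneq q q0) => [->|ne].
  + have [lb [g r]] := IH2 (rep q0) hr1 hr2 (rep_nonspec hq0 hs0).
    by exists lb; rewrite /= r e /= eqxx.
  + by have [lb [g r]] := IH1 q hq hs; exists lb; rewrite /= r e /= (negbTE ne).
- case: (eqVneq (rep q0) r) => [<-|ne].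
  + by have [lb [g r']] := IH1 q0 hq0 hs0; exists lb; rewrite /= r' e /= eqxx.
  + by have [lb [g r']] := IH2 r hr er hs; exists lb; rewrite /= r' e /= (negbTE ne).
Qed.

Lemma label_state_first q m : m <= first_occ q ->
  (forall k, k < first_occ q -> label_sched (inl q) k = Some (first_occupant q)) ->
  label_state (inl q) m = sB m (first_occupant q).
Proof.
case: m => [|m] hm e; first by rewrite /label_state /= sB0.
exact/follower_state_copy/e.
Qed.

Lemma label_state_transient q : q \in visited -> q \notin recurrent ->
  [/\ forall m, m <= first_occ q -> label_state (inl q) m = sB m (first_occupant q),
      forall m, first_occ q <= m <= last_occ q -> label_state (inl q) m = q &
      forall m, last_occ q <= m -> label_state (inl q) m = sB m (last_occupant q)].
Proof.
move=> hV hI; have [hfl _ hil _ _] := last_occP hV hI.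
have e k : label_sched (inl q) k = if k < first_occ q then Some (first_occupant q)
    else if k < last_occ q then None else Some (last_occupant q).
  by rewrite /label_sched (negbTE hI).
have first m : m <= first_occ q -> label_state (inl q) m = sB m (first_occupant q).
  by move=> hm; apply: label_state_first => // k hk; rewrite e hk.
have sit m : first_occ q <= m <= last_occ q -> label_state (inl q) m = q.
  case/andP=> h1 h2; rewrite /label_state (follower_state_idle h1).
    by rewrite -/(label_state _ _) first //; have [] := first_occupantP hV.
  by move=> k /andP[k1 k2]; rewrite e ltnNge k1 (leq_trans k2 h2).
split => // m; rewrite leq_eqVlt => /predU1P[<-|]; first by rewrite sit ?hfl ?leqnn.
case: m => // m; rewrite ltnS => hm; apply: follower_state_copy.
by rewrite e ltnNge (leq_trans hfl hm) /= ltnNge hm.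
Qed.

Lemma label_state_spec q : spec = Some q -> q \in recurrent ->
  (forall m, m <= first_occ q -> label_state (inl q) m = sB m (first_occupant q)) /\
  (forall m, first_occ q <= m -> label_state (inl q) m = q).
Proof.
move=> es hI.
have e k : label_sched (inl q) k = if k < first_occ q then Some (first_occupant q) else None.
  by rewrite /label_sched hI es eqxx.
have first m : m <= first_occ q -> label_state (inl q) m = sB m (first_occupant q).
  by move=> hm; apply: label_state_first => // k hk; rewrite e hk.
split => // m hm; rewrite /label_state (follower_state_idle hm).
  by rewrite -/(label_state _ _) first //; have [] := first_occupantP (recurrent_visited hI).
by move=> k /andP[k1 _]; rewrite e ltnNge k1.
Qed.

Definition labels : {set QB + QB} :=
  [set lb | match lb with
            | inl q => q \in visited
            | inr r => [&& r \in recurrent, rep r == r & Some r != spec]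
            end].

Lemma generic_label lb : generic lb -> lb \in labels.
Proof.
by case: lb => [q|r]; rewrite /generic /= [_ \in labels]inE // => /andP[/recurrent_visited].
Qed.

Lemma labels_cover_recurrent m q : q \in recurrent -> Some q != spec -> first_occ q <= m ->
  exists lb, [/\ generic lb, label_sched lb m = None & label_state lb m = q].
Proof.
move=> hq hs hf; case: (eqVneq (swap m) (Some q)) => [e|ne].
- have [hr1 hr2] := rep_recurrent hq; have [_ _ _ _ hsb] := swapP e.
  have [lb [g rl]] := (roles_taken m).2 (rep q) hr1 hr2 (rep_nonspec hq hs).
  exists lb; split => //; first by rewrite label_sched_generic // /role_target rl e eqxx.
  by have [_] := role_invariant m g; rewrite /role_state rl => ->.
- have [lb [g rl]] := (roles_taken m).1 q hq hs.
  exists lb; split => //.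
    by rewrite label_sched_generic // /role_target rl (negbTE ne) ltnNge hf andbF.
  by have [_] := role_invariant m g; rewrite /role_state rl => -[->].
Qed.

Lemma labels_cover m (i : 'I_n) : val i != 0 -> actor m <> Some i ->
  exists lb, [/\ lb \in labels, label_sched lb m = None & label_state lb m = sB m i].
Proof.
move=> hi hmu; set q := sB m i.
have hV : q \in visited by apply: visitedP.
have hf : first_occ q <= m by apply: (first_occ_min hi).
case: (boolP (q \in recurrent)) => hI.
  case: (eqVneq spec (Some q)) => hs.
    exists (inl q); split; first by rewrite inE.
      by rewrite /label_sched hI hs eqxx ltnNge hf.
    by have [_ ->] := label_state_spec hs hI.
  have hs' : Some q != spec by rewrite eq_sym.
  have [lb [g hn hst]] := labels_cover_recurrent hI hs' hf.
  by exists lb; split => //; apply: generic_label.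
have [_ _ _ _ hlast] := last_occP hV hI.
have hml : m < last_occ q by apply: (hlast m.+1 i hi); rewrite sB_frame.
exists (inl q); split; first by rewrite inE.
  by rewrite /label_sched (negbTE hI) ltnNge hf /= hml.
by have [_ -> //] := label_state_transient hV hI; rewrite hf ltnW.
Qed.

Lemma role_target_state lb m i : generic lb -> role_target lb m = Some i ->
  val i != 0 /\ label_state lb m = sB m i.
Proof.
move=> g; have [ok st] := role_invariant m g; move: ok st; rewrite /role_state /role_target.
case: (role_of lb m) => [q|r] /= ok st.
- case/andP: ok => hq hs; case: eqP => [e [<-]|_].
    have [hT _ _ _ hsb] := swapP e; have [hr1 _] := rep_recurrent hq.
    by rewrite hsb leader_neq0 // st.1 // (leq_trans (first_occ_stable q) hT).
  case: ifP => // /andP[_ hm] [<-]; have [_ ->] := st.2 hm.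
  by have [] := first_occupantP (recurrent_visited hq).
- case/and3P: ok => hr _ _.
  have leader_ok : Some (leader r) = Some i -> val i != 0 /\ label_state lb m = sB m i.
    by move=> [<-]; rewrite leader_neq0.
  by case: (swap m) => [q0|] //; case: ifP.
Qed.

Lemma label_sched_state lb m i : lb \in labels -> label_sched lb m = Some i ->
  val i != 0 /\ label_state lb m = sB m i.
Proof.
case: lb => [q|r]; rewrite inE => hU; last exact: role_target_state.
have [h1 h2] := first_occupantP hU.
case: (boolP (q \in recurrent)) => hI.
  case: (eqVneq (Some q) spec) => hs.
    rewrite /label_sched hI hs eqxx; case: ifP => // hm [<-]; rewrite h1.
    by have [st _] := label_state_spec (esym hs) hI; rewrite st // ltnW.
  have g : generic (inl q) by rewrite /generic /= hI hs.
  by rewrite label_sched_generic //; apply: role_target_state.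
have [hfl hil0 _ _ _] := last_occP hU hI; have [st1 _ st3] := label_state_transient hU hI.
rewrite /label_sched (negbTE hI); case: ifP => hm; first by move=> [<-]; rewrite h1 st1 // ltnW.
by case: ifP => // hl [<-]; rewrite hil0 st3 // leqNgt hl.
Qed.

Definition label_moves lb m := exists j, actor m = Some j /\ label_sched lb m = Some j.

Lemma sitting_moves lb q m : generic lb -> stable_time <= m -> role_of lb m = Sitting q ->
  exists m', m <= m' /\ label_moves lb m'.
Proof.
move=> g hT rl; have [ok _] := role_invariant m g; rewrite rl /= in ok.
case/andP: ok => hq hs; set j := leader (rep q).
have ex : exists k, [&& m <= k, actor k == Some j & sB k j == q].
  have [m2 [h2 e2]] := leader_visits hq hs m.
  have [m3 [h3 e3 s3 _]] := next_move j m2.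
  by exists m3; rewrite (leq_trans h2 h3) e3 s3 e2 !eqxx.
case: (ex_minnP ex) => m1 /and3P[h1 /eqP e1 /eqP s1] hmin.
have keep : role_of lb m1 = Sitting q.
  apply: (interval_ind (P := fun k => role_of lb k = Sitting q)) h1 rl _ => k /andP[k1 k2] rk.
  rewrite /= rk update_sitting //; apply/eqP => /swapP[_ _ _ hmu hsb].
  by have := hmin k; rewrite k1 hmu hsb !eqxx leqNgt k2 => /(_ isT).
exists m1; split => //; exists j; split => //.
rewrite label_sched_generic // /role_target keep.
suff -> : swap m1 = Some q by rewrite eqxx.
have hj : (j != 0 :> nat) by have [hr _] := rep_recurrent hq; apply: leader_neq0.
by rewrite /swap (leq_trans hT h1) e1 /= s1 hq hs eqxx hj.
Qed.

Lemma floating_moves lb r m : generic lb -> stable_time <= m -> role_of lb m = Floating r ->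
  exists m', m <= m' /\ label_moves lb m'.
Proof.
move=> g hT rl; set j := leader r.
have [m1 [h1 e1 _ idle]] := next_move j m.
have keep : role_of lb m1 = Floating r.
  apply: (interval_ind (P := fun k => role_of lb k = Floating r)) h1 rl _ => k hk rk.
  rewrite /= rk /update_role; case e: (swap k) => [q0|] //; case: eqP => // eq.
  by have [_ _ _ hmu _] := swapP e; case: (idle k hk); rewrite hmu eq.
case e: (swap m1) => [q0|]; first case: (eqVneq (rep q0) r) => eq.
- have [hT0 _ _ _ _] := swapP e.
  have rl' : role_of lb m1.+1 = Sitting q0 by rewrite /= keep /update_role e eq eqxx.
  have [m' [hm' mv]] := sitting_moves g (leq_trans hT0 (leqnSn _)) rl'.
  by exists m'; split => //; apply: leq_trans hm'; apply: leq_trans h1 (leqnSn _).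
- exists m1; split => //; exists j; split => //.
  by rewrite label_sched_generic // /role_target keep e (negbTE eq).
- exists m1; split => //; exists j; split => //.
  by rewrite label_sched_generic // /role_target keep e.
Qed.

Lemma label_fair lb : lb \in labels -> forall m, exists m', m <= m' /\
  (label_moves lb m' \/
   exists q, [/\ spec = Some q, lb = inl q, stable_time <= m' & loop_enabled q m']).
Proof.
move=> hU m; case: (boolP (generic lb)) => g.
  set m0 := maxn m stable_time.
  have late m' : m0 <= m' -> m <= m' by apply: leq_trans; rewrite leq_maxl.
  case rl: (role_of lb m0).
  - have [m' [h1 h2]] := sitting_moves g (leq_maxr _ _) rl.
    by exists m'; split; [apply: late | left].
  - have [m' [h1 h2]] := floating_moves g (leq_maxr _ _) rl.
    by exists m'; split; [apply: late | left].
case: lb hU g => [q|r]; rewrite inE /generic /= => hU g; last by rewrite hU in g.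
case: (boolP (q \in recurrent)) => hI.
  have hs : spec = Some q by move: g; rewrite hI /=; case: eqP.
  have [_ loops] := spec_loops hs; have [m' [h1 h2 h3]] := loops m.
  by exists m'; split => //; right; exists q.
have [hfl _ _ _ _] := last_occP hU hI.
have [m' [h1 h2]] := actor_inf (Some (last_occupant q)) (maxn m (last_occ q)).
have hl : last_occ q <= m' by apply: leq_trans h1; rewrite leq_maxr.
exists m'; split; first by apply: leq_trans h1; rewrite leq_maxl.
left; exists (last_occupant q); split => //.
by rewrite /label_sched (negbTE hI) ltnNge (leq_trans hfl hl) /= ltnNge hl.
Qed.

Hypothesis labels_fit : #|labels| < K.

(* Helper 0 plays B_1, helpers 1 .. #|labels| carry the labels, the others copy [p1]. *)
Definition label_of (h : 'I_K) : option (QB + QB) :=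
  if 0 < val h <= #|labels| then Some (nth (inl (t_init B)) (enum labels) (val h).-1) else None.

Definition helper_of lb : 'I_K := insubd (h0 K_gt0) (index lb (enum labels)).+1.

Lemma helper_ofK lb : lb \in labels ->
  val (helper_of lb) = (index lb (enum labels)).+1 /\ label_of (helper_of lb) = Some lb.
Proof.
move=> hU; have hi : index lb (enum labels) < #|labels| by rewrite cardE index_mem mem_enum.
have hv : val (helper_of lb) = (index lb (enum labels)).+1.
  by rewrite /helper_of val_insubd (leq_ltn_trans hi labels_fit).
by rewrite /label_of hv hi nth_index // mem_enum.
Qed.

Lemma label_ofK h lb : label_of h = Some lb -> [/\ lb \in labels, helper_of lb = h & val h != 0].
Proof.
rewrite /label_of; case: ifP => // /andP[h1 h2] [<-].
have hs : (val h).-1 < size (enum labels) by rewrite -cardE prednK.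
have hin : nth (inl (t_init B)) (enum labels) (val h).-1 \in labels by rewrite -mem_enum mem_nth.
split => //; last by rewrite -lt0n.
apply: val_inj; have [-> _] := helper_ofK hin.
by rewrite index_uniq ?enum_uniq // prednK.
Qed.

Definition sched (h : 'I_K) m : option 'I_n :=
  if label_of h is Some lb then label_sched lb m else Some p1.

Definition loop_witness q m : SB * {set QA + QB} :=
  if pselect (loop_enabled q m) is left H then sval (cid H) else (eB 0 p0, set0).

Lemma loop_witnessP q m : loop_enabled q m -> loop_guard q m (loop_witness q m).
Proof. by rewrite /loop_witness; case: pselect => // H _; apply: svalP. Qed.

Definition extra_loop m : option ('I_K * SB * {set QA + QB}) :=
  if spec is Some q then
    (if (stable_time <= m) && `[< loop_enabled q m >]
     then Some (helper_of (inl q), (loop_witness q m).1, (loop_witness q m).2) else None)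
  else None.

Lemma hstate_label h lb m : label_of h = Some lb -> hstate sched h m = label_state lb m.
Proof. by move=> e; apply: eq_follower_state => k; rewrite /sched e. Qed.

Lemma hstate_unlabelled h m : label_of h = None -> hstate sched h m = sB m p1.
Proof. by move=> e; case: m => [|m]; rewrite /hstate /= ?sB0 // /sched e. Qed.

Lemma sched_stateP h m i : val h != 0 -> sched h m = Some i ->
  val i != 0 /\ hstate sched h m = sB m i.
Proof.
move=> hh; rewrite /sched; case e: (label_of h) => [lb|] hs.
  by rewrite (hstate_label _ e); apply: label_sched_state hs; case: (label_ofK e).
by move: hs => [<-]; rewrite hstate_unlabelled.
Qed.

Lemma idle_coverP m (i : 'I_n) : val i != 0 -> actor m <> Some i ->
  exists h : 'I_K, [/\ val h != 0, ~~ follows_actor sched h m & hstate sched h m = sB m i].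
Proof.
move=> hi hmu; have [lb [hU hn hst]] := labels_cover hi hmu.
have [hv hl] := helper_ofK hU.
exists (helper_of lb); split; first by rewrite hv.
- by rewrite /follows_actor /sched hl hn; case: (actor m).
- by rewrite (hstate_label _ hl).
Qed.

Lemma extra_enabledP m h sg g : extra_loop m = Some (h, sg, g) ->
  [/\ val h != 0, (hstate sched h m, sg, g, hstate sched h m) \in t_delta B &
      exists p : proc K, p <> Some h /\ lstate (block_start sched m) p \in g].
Proof.
rewrite /extra_loop; case es: spec => [q|] //; case: ifP => // /andP[hT /asboolP hc] [eh esg eg].
have [hI _] := spec_loops es.
have hU : inl q \in labels by rewrite inE recurrent_visited.
have [hv hl] := helper_ofK hU.
have hq : hstate sched h m = q.
  have [_ st] := label_state_spec es hI.
  by rewrite -eh (hstate_label _ hl) st // (leq_trans (first_occ_stable q) hT).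
have [hd hw] := loop_witnessP hc; rewrite esg eg in hd hw.
split; [by rewrite -eh hv | by rewrite hq |].
case: hw => [hA|[hB|[i [hi hmu hne hin]]]]; first by exists None.
  by exists (Some (h0 K_gt0)); split => // -[e]; move: hv; rewrite eh -e.
have [h' [hh' _ hst]] := idle_coverP hi hmu.
exists (Some h'); split; first by move=> [e]; apply: hne; rewrite -hst e hq.
by rewrite /= (negbTE hh') hst.
Qed.

Lemma helper_fairP (h : 'I_K) : val h != 0 -> forall m, exists m', m <= m' /\
  (follows_actor sched h m' \/ exists sg g, extra_loop m' = Some (h, sg, g)).
Proof.
move=> hh m; case e: (label_of h) => [lb|].
  have [hU hl _] := label_ofK e.
  have [m' [h1 [[j [hmu hj]]|[q [es el hT hc]]]]] := label_fair hU m.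
    by exists m'; split => //; left; rewrite /follows_actor hmu /sched e hj.
  exists m'; split => //; right; exists (loop_witness q m').1, (loop_witness q m').2.
  by rewrite /extra_loop es hT /=; case: asboolP => // _; rewrite -el hl.
have [m' [h1 h2]] := actor_inf (Some p1) m.
by exists m'; split => //; left; rewrite /follows_actor h2 /sched e.
Qed.

Lemma schedule_run : equivalent_run K.
Proof. exact: (simulation_run K_gt0 sched_stateP idle_coverP extra_enabledP helper_fairP). Qed.

End Schedule.

(** * The cutoff *)

Lemma card_labels (R : {set QB}) rep spec :
  (forall r, r \in recurrent -> rep r == r -> Some r != spec -> r \in R) ->
  #|labels rep spec| <= #|visited| + #|R|.
Proof.
move=> HR; have sub : labels rep spec \subset (inl @: visited) :|: (inr @: R).
  apply/subsetP => -[q|r]; rewrite inE in_setU => h.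
    by rewrite imset_f.
  by case/and3P: h => h1 h2 h3; rewrite orbC imset_f ?HR.
apply: leq_trans (subset_leq_card sub) _; apply: leq_trans (leq_card_setU _ _).1 _.
by rewrite !card_imset //; [exact: inr_inj | exact: inl_inj].
Qed.

Definition single_recurrent := forall (j : 'I_n) q1 q2,
  val j != 0 -> q1 \in recurrent_at j -> q2 \in recurrent_at j -> q1 = q2.

Lemma B1_loops qs :
  single_recurrent ->
  qs \in recurrent_at p0 -> qs \in recurrent ->
  forall m, exists m', [/\ m <= m', stable_time <= m' & loop_enabled qs m'].
Proof.
move=> single hq0 hqI m; move: (hqI); rewrite inE => /existsP[j /andP[hj hqj]].
have stay k : settle_time <= k -> sB k j = qs.
  by move=> hk; apply: (single j) => //; apply: settle_timeP.
have [m1 [h1 e1 _ _]] := next_move j (maxn m stable_time).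
have [hm hT] : m <= m1 /\ stable_time <= m1.
  by split; apply: leq_trans h1; rewrite ?leq_maxl ?leq_maxr.
have hS := leq_trans settle_stable hT.
have := x_step m1; rewrite e1 => -[g [q' [hd [[p [hp hin]] [_ h2]]]]].
have hloop : (qs, eB m1 j, g, qs) \in t_delta B.
  by rewrite -[in X in (X, _, _, _)](stay m1 hS) -(stay m1.+1 (leqW hS)) /sB h2 eqxx.
have enabled k : inr (sB k p0) \in g \/ inl (sA k) \in g \/ (exists i : 'I_n,
    [/\ val i != 0, actor k <> Some i, sB k i <> qs & inr (sB k i) \in g]) ->
  loop_enabled qs k.
  by move=> H; exists (eB m1 j, g); split => //=; case: H => [|[]]; auto.
case: p hp hin => [i|] hp hin; last by exists m1; split => //; apply: enabled; auto.
case: (boolP (val i == 0)) => hi.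
  by exists m1; split => //; apply: enabled; left; rewrite -(p0_eq hi).
case: (eqVneq (sB m1 i) qs) => hs.
  have [m2 [h2' e2]] := recurrent_atP hq0 m1.
  exists m2; split; [exact: leq_trans hm h2' | exact: leq_trans hT h2' | apply: enabled].
  by left; rewrite e2 -hs.
exists m1; split => //; apply: enabled; right; right; exists i; split => //; last exact/eqP.
by rewrite e1 => -[e]; apply: hp; rewrite e.
Qed.

Section Cutoff.
Variable K : nat.
Hypothesis K_ge : 2 * #|QB| <= K.

Lemma cutoff_gt0 : 0 < K.
Proof. by apply: leq_trans K_ge; rewrite muln_gt0 /=; apply/card_gt0P; exists (t_init B). Qed.

Lemma labels_fit (R : {set QB}) rep spec : #|R| < #|QB| ->
  (forall r, r \in recurrent -> rep r == r -> Some r != spec -> r \in R) ->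
  #|labels rep spec| < K.
Proof.
move=> hR HR; apply: leq_ltn_trans (card_labels HR) _; apply: leq_trans K_ge.
by rewrite mul2n -addnn -addnS leq_add ?max_card.
Qed.

Lemma run_two_recurrent (i : 'I_n) u v : val i != 0 ->
  u \in recurrent_at i -> v \in recurrent_at i -> u != v ->
  equivalent_run K.
Proof.
move=> hi hu hv huv.
have uI : u \in recurrent by apply: recurrent_atW hu.
have vI : v \in recurrent by apply: recurrent_atW hv.
pose rep q := if q == v then u else q.
pose lead r := if r == u then i else recurrer r.
apply: (schedule_run cutoff_gt0 (rep := rep) (leader := lead) (spec := None)) => //.
- move=> q hq; rewrite /rep; case: (eqVneq q v) => [_|nv]; first by rewrite uI (negbTE huv).
  by rewrite hq (negbTE nv).
- by move=> r hr; rewrite /lead; case: ifP => _ //; case: (recurrerP hr).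
- move=> q hq _; apply: recurrent_atP; rewrite /lead /rep.
  case: (eqVneq q v) => [->|nv]; first by rewrite eqxx.
  case: (eqVneq q u) => [->|nu] //.
  by case: (recurrerP hq).
- apply: (labels_fit (R := recurrent :\ v)).
    by have := max_card recurrent; rewrite (cardsD1 v) vI.
  move=> r hr; rewrite /rep in_setD1 hr andbT; case: (eqVneq r v) => [->|//].
  by rewrite (negbTE huv).
Qed.

Lemma run_B1_recurrent qs :
  single_recurrent ->
  qs \in recurrent_at p0 -> qs \in recurrent ->
  equivalent_run K.
Proof.
move=> single hq0 hI.
apply: (schedule_run cutoff_gt0 (rep := id) (leader := recurrer) (spec := Some qs)) => //.
- by move=> r /recurrerP[].
- by move=> q /recurrerP[_ /recurrent_atP].
- by move=> q [<-]; split => //; apply: B1_loops.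
- apply: (labels_fit (R := recurrent :\ qs)).
    by have := max_card recurrent; rewrite (cardsD1 qs) hI.
  by move=> r hr _ hs; rewrite in_setD1 hr andbT; apply: contra hs => /eqP ->.
Qed.

Lemma run_B1_transient : (forall q, q \in recurrent_at p0 -> q \notin recurrent) ->
  equivalent_run K.
Proof.
move=> disj.
apply: (schedule_run cutoff_gt0 (rep := id) (leader := recurrer) (spec := None)) => //.
- by move=> r /recurrerP[].
- by move=> q /recurrerP[_ /recurrent_atP].
apply: (labels_fit (R := recurrent)) => //.
have hp0 : sB settle_time p0 \in recurrent_at p0 by apply: settle_timeP.
have dis : [disjoint recurrent & recurrent_at p0].
  by apply/pred0P => q /=; apply/negP => /andP[h1 /disj]; rewrite h1.
have [_ /eqP sum] := leq_card_setU recurrent (recurrent_at p0); rewrite dis in sum.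
have := max_card (recurrent :|: recurrent_at p0); rewrite sum; apply: leq_trans.
by rewrite -addn1 leq_add2l; apply/card_gt0P; exists (sB settle_time p0).
Qed.

Lemma cutoff_run : equivalent_run K.
Proof.
case: (pselect (exists (i : 'I_n) u v,
  [/\ val i != 0, u \in recurrent_at i, v \in recurrent_at i & u != v])) => [|nA].
  by move=> [i [u [v [hi hu hv huv]]]]; apply: run_two_recurrent hi hu hv huv.
have single : single_recurrent.
  by move=> j q1 q2 hj h1 h2; apply/eqP; apply: contraT => ne; case: nA; exists j, q1, q2.
case: (pselect (exists qs, qs \in recurrent_at p0 /\ qs \in recurrent)) => [[qs [h0 hI]]|nB].
  exact: run_B1_recurrent single h0 hI.
by apply: run_B1_transient => q hq; apply/negP => hI; apply: nB; exists q.
Qed.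

End Cutoff.
End FairRun.

Unset Implicit Arguments.
Set Strict Implicit.

Theorem mainTheorem7 (QA QB SA SB : finType)
    (A : template QA QB QA SA) (B : template QA QB QB SB)
    (h : ltlx QA SA QB SB) (n : nat) :
  2 * #|QB| < n ->
  E_uncond A B n h -> E_uncond A B (2 * #|QB|) h.
Proof.
move=> hn [x [x_fair hx]].
have n_gt1 : 1 < n.
  apply: leq_ltn_trans hn; rewrite mul2n -addnn; apply: leq_trans (leq_addr _ _).
  by apply/card_gt0P; exists (t_init B).
have [y [y_fair hy]] := cutoff_run n_gt1 x_fair (leqnn _).
by exists y; rewrite hy.
Qed.
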